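(* Let $E/F$ be a quadratic extension of fields of characteristic $0$ and $\beta\in\mathrm{GL}_n(E)$ skew-Hermitian. Suppose $A'\in\mathfrak h_n^\beta(F)$ is regular semisimple and $A'=\bar a a$ for some $a\in\mathrm{GL}_n(E)$. Then $A'=\beta^{-1}\zeta^*\beta\zeta$ for some $\zeta\in\mathrm{GL}_n(E)$.
   Context: $x\mapsto\bar x$ is the nontrivial automorphism of $E/F$ (entrywise on matrices), $g^*={}^t\bar g$, $\beta^*=-\beta$. $\mathfrak h_n^\beta(F)$ is the set of $A'\in\mathrm{Mat}_n(E)$ with $A'^*=\beta A'\beta^{-1}$. *)

From HB Require Import structures.
From mathcomp Require Import all_boot all_order all_algebra.
Set Implicit Arguments. Unset Strict Implicit. Unset Printing Implicit Defensive.
Import Order.TTheory GRing.Theory Num.Theory.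
Local Open Scope ring_scope.

(* The quadratic extension E/F is encoded by a field E together with a
   nontrivial involutive field automorphism [sigma] (x |-> xbar); F is its
   fixed field. *)
Definition is_nontrivial_involution (E : fieldType) (sigma : {rmorphism E -> E}) :=
  (forall x, sigma (sigma x) = x) /\ (exists x, sigma x != x).

Definition in_base (E : fieldType) (sigma : {rmorphism E -> E}) (x : E) :=
  sigma x = x.

Definition mxconj (E : fieldType) (sigma : {rmorphism E -> E}) n (g : 'M[E]_n) :=
  map_mx sigma g.
Definition mxstar (E : fieldType) (sigma : {rmorphism E -> E}) n (g : 'M[E]_n) :=
  (map_mx sigma g)^T.

Definition in_h (E : fieldType) (sigma : {rmorphism E -> E}) n (beta A : 'M[E]_n) :=
  mxstar sigma A = beta *m A *m invmx beta.

(* regular semisimple: the characteristic polynomial has distinct roots in an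
   algebraic closure, i.e. it is separable (coprime to its derivative). *)
Definition regular_semisimple (E : fieldType) n (A : 'M[E]_n) :=
  coprimep (char_poly A) (char_poly A)^`().

From HB Require Import structures.
From mathcomp Require Import all_boot all_algebra separable zify.
From Stdlib Require Import Classical Wf_nat.
Set Implicit Arguments. Unset Strict Implicit. Unset Printing Implicit Defensive.
Import GRing.Theory.
Local Open Scope ring_scope.

(* Regular semisimplicity of A' makes it cyclic: some v has a local minimal
   polynomial of full degree, so every vector is q(A') v.  Put b = abar; then
   b bbar = A' and b conj(A') = A' b, hence the sigma-semilinear map
   S w = b wbar satisfies S (q(A') w) = q^sigma(A') (S w) and S^2 = A'.  Writing
   S v = q(A') v gives A' v = S^2 v = q^sigma(A') q(A') v, and since both sides
   are polynomials in A' we get A' = q^sigma(A') q(A').  For zeta = q(A'),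
   zeta^* = q^sigma applied to A'^* = beta A' beta^-1, i.e. zeta^* is
   beta q^sigma(A') beta^-1. *)

Lemma ex_least_nat (P : nat -> Prop) :
  (exists n, P n) -> exists2 n, P n & forall k, P k -> (n <= k)%N.
Proof.
move=> /(dec_inh_nat_subset_has_unique_least_element _ (fun k => classic (P k))).
by case=> n [[Pn n_min] _]; exists n => // k /n_min/leP.
Qed.

Lemma separable_dvdp_exp (F : fieldType) (p q : {poly F}) k :
  separable_poly p -> p %| q ^+ k -> p %| q.
Proof.
move=> sep_p p_qk; set g := gcdp p q; set h := p %/ g.
have Dp : h * g = p by rewrite divpK ?dvdp_gcdl.
have hq : coprimep h q.
  have hg : coprimep h g by apply: separable_coprime sep_p _; rewrite Dp.
  apply/coprimepP => d dh dq; move/coprimepP: hg; apply => //.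
  by rewrite dvdp_gcd dq andbT (dvdp_trans dh) // -Dp dvdp_mulIl.
have h1 : h %= 1.
  move/coprimepP: (coprimep_expr k hq); apply => //.
  by apply: dvdp_trans p_qk; rewrite -Dp dvdp_mulIl.
by rewrite -Dp -[q]mul1r dvdp_mul ?dvdp_gcdr //; case/andP: h1.
Qed.

(* In 'M_n[X], X - A divides p(X) because p(A) = 0; taking determinants,
   char_poly A divides det (p%:M) = p ^+ n. *)
Lemma char_poly_dvdp_exp (F : fieldType) n (A : 'M[F]_n.+1) p :
  horner_mx A p = 0 -> char_poly A %| p ^+ n.+1.
Proof.
move=> pA; have [phi [[phiV phiK Kphi] phiZ phiC _]] := mx_poly_ring_isom F n.
have : root (map_poly (@scalar_mx F n.+1) p) A by apply/rootP.
case/factor_theorem => q Dq.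
have Dp : p%:M = phiV q * char_poly_mx A.
  apply: (can_inj phiK); rewrite rmorphM /= Kphi phiZ Dq.
  by rewrite /char_poly_mx rmorphB /= phiZ phiC map_polyX.
by apply/dvdpP; exists (\det (phiV q)); rewrite -det_scalar Dp -mulmxE det_mulmx.
Qed.

Lemma mx_eq0_cols (R : nzRingType) m n (X : 'M[R]_(m, n)) :
  (forall w : 'cV_n, X *m w = 0) -> X = 0.
Proof.
move=> X0; apply/matrixP => i j.
by have /colP/(_ i) := X0 (delta_mx j 0); rewrite -colE !mxE.
Qed.

Section LocalMinpoly.

Variables (F : fieldType) (n : nat) (A : 'M[F]_n.+1).
Implicit Types (p q r g : {poly F}) (v w : 'cV[F]_n.+1).

Definition annihilates p v := horner_mx A p *m v = 0.

Definition local_minpoly v p :=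
  annihilates p v /\ forall r, annihilates r v -> p %| r.

Lemma annihilates_mull p q v : annihilates q v -> annihilates (p * q) v.
Proof.
by rewrite /annihilates rmorphM /= -mulmxE -mulmxA => ->; rewrite mulmx0.
Qed.

Lemma annihilates_dvdp p q v : annihilates q v -> q %| p -> annihilates p v.
Proof. by move=> qv /dvdpP[r ->]; apply: annihilates_mull. Qed.

Lemma annihilatesDr p v w :
  annihilates p v -> annihilates p w -> annihilates p (v + w).
Proof. by rewrite /annihilates mulmxDr => -> ->; rewrite addr0. Qed.

Lemma annihilatesBr p v w :
  annihilates p (v + w) -> annihilates p w -> annihilates p v.
Proof. by rewrite /annihilates mulmxDr => + w0; rewrite w0 addr0. Qed.

Lemma annihilates_char_poly v : annihilates (char_poly A) v.
Proof. by rewrite /annihilates Cayley_Hamilton mul0mx. Qed.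

Lemma local_minpoly_exists v : exists p, local_minpoly v p.
Proof.
have [k [p [p_neq0 [pv <-]]] p_min] := ex_least_nat
  (ex_intro (fun k => exists p, p != 0 /\ annihilates p v /\ size p = k) _
    (ex_intro _ _ (conj (monic_neq0 (char_poly_monic A))
                        (conj (annihilates_char_poly v) erefl)))).
exists p; split=> // r rv; apply/modp_eq0P/eqP/negPn/negP => rp_neq0.
have rpv : annihilates (r %% p) v.
  move: rv; rewrite /annihilates {1}(divp_eq r p) rmorphD /= mulmxDl.
  have := annihilates_mull (r %/ p) pv.
  by rewrite /annihilates => ->; rewrite add0r.
by have := ltn_modp r p; rewrite p_neq0 ltnNge p_min //; exists (r %% p).
Qed.

Lemma local_minpoly_dvd_char v p : local_minpoly v p -> p %| char_poly A.
Proof. by case=> _; apply; apply: annihilates_char_poly. Qed.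

Lemma local_minpoly_neq0 v p : local_minpoly v p -> p != 0.
Proof.
move/local_minpoly_dvd_char; apply: contraTneq => ->.
by rewrite dvd0p monic_neq0 // char_poly_monic.
Qed.

Lemma local_minpoly_horner w q g :
  local_minpoly w q -> g %| q -> local_minpoly (horner_mx A g *m w) (q %/ g).
Proof.
move=> wq gq; have q_neq0 := local_minpoly_neq0 wq.
have g_neq0 : g != 0 by apply: contraNneq q_neq0 => g0; rewrite -dvd0p -g0.
case: wq => qw q_min; split.
  by rewrite /annihilates mulmxA mulmxE -rmorphM /= divpK.
move=> r; rewrite /annihilates mulmxA mulmxE -rmorphM /= => /q_min.
by rewrite -{1}(divpK gq) dvdp_mul2r.
Qed.

Lemma local_minpoly_add v w p q : local_minpoly v p -> local_minpoly w q ->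
  coprimep p q -> local_minpoly (v + w) (p * q).
Proof.
move=> [pv p_min] [qw q_min] pq; split.
  by apply: annihilatesDr; [rewrite mulrC|]; apply: annihilates_mull.
move=> r rvw; rewrite Gauss_dvdp //; apply/andP; split.
  rewrite -(Gauss_dvdpl r pq); apply/p_min/(annihilatesBr (w := w)).
    by rewrite mulrC; apply: annihilates_mull.
  exact: annihilates_mull.
rewrite coprimep_sym in pq; rewrite -(Gauss_dvdpl r pq); apply/q_min.
rewrite addrC in rvw; apply/(annihilatesBr (w := v)).
  by rewrite mulrC; apply: annihilates_mull.
exact: annihilates_mull.
Qed.

End LocalMinpoly.

Section CyclicVector.

Variables (F : fieldType) (n : nat) (A : 'M[F]_n.+1).
Implicit Types (p q : {poly F}) (v w x : 'cV[F]_n.+1).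

Definition cyclic_vector v := forall w, exists q, w = horner_mx A q *m v.

(* If p(A) kills v but not some w, then v + g(A) w with g = gcd(p, q) has the
   larger local minimal polynomial p * (q / g); separability makes the two
   factors coprime. *)
Lemma separable_max_local_minpoly_size v p :
  separable_poly (char_poly A) -> local_minpoly A v p ->
  (forall w q, local_minpoly A w q -> size q <= size p)%N ->
  size p = n.+2.
Proof.
move=> sepA vp p_max; have p_neq0 := local_minpoly_neq0 vp.
suff pA0 : horner_mx A p = 0.
  have char_p := separable_dvdp_exp sepA (char_poly_dvdp_exp pA0).
  rewrite -(size_char_poly A); apply: eqp_size.
  by rewrite /eqp char_p (local_minpoly_dvd_char vp).
apply: mx_eq0_cols => w; have [q wq] := local_minpoly_exists A w.
set g := gcdp p q; set h := q %/ g.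
have gq : g %| q := dvdp_gcdr p q.
have Dq : h * g = q by rewrite divpK.
have hg : coprimep h g.
  by apply: separable_coprime sepA _; rewrite Dq (local_minpoly_dvd_char wq).
have ph : coprimep p h.
  apply/coprimepP => d dp dh; move/coprimepP: hg; apply => //.
  by rewrite dvdp_gcd dp (dvdp_trans dh) // -Dq dvdp_mulIl.
have v'ph := local_minpoly_add vp (local_minpoly_horner wq gq) ph.
have h_neq0 : h != 0.
  by apply: contraNneq (local_minpoly_neq0 wq) => h0; rewrite -Dq h0 mul0r.
have /eqP h_size1 : size h == 1%N.
  have := p_max _ _ v'ph; rewrite size_mul // eqn_leq size_poly_gt0 h_neq0 andbT.
  by have := size_poly_gt0 p; rewrite p_neq0 -/h; move: (size p) (size h); lia.
have /andP[h1 _] : h %= 1 by rewrite -size_poly_eq1 h_size1.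
apply: annihilates_dvdp (proj1 wq) _.
by rewrite -Dq -[p]mul1r dvdp_mul // dvdp_gcdl.
Qed.

Definition krylov_mx v : 'M_n.+1 := \matrix_(i, j) (A ^+ j *m v) i 0.

Lemma krylov_mxM v x : krylov_mx v *m x = horner_mx A (rVpoly x^T) *m v.
Proof.
rewrite /rVpoly poly_def rmorph_sum /= mulmx_suml; apply/colP => i.
rewrite !mxE summxE; apply: eq_bigr => j _.
by rewrite valK linearZ /= rmorphXn /= horner_mx_X -scalemxAl !mxE mulrC.
Qed.

Lemma krylov_mx_unit v p : local_minpoly A v p -> size p = n.+2 ->
  krylov_mx v \in unitmx.
Proof.
move=> [_ p_min] size_p; rewrite unitmxE unitfE -det_tr.
apply/negP => /det0P[u u_neq0 uK]; apply/negP: u_neq0; rewrite negbK.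
have uv : annihilates A (rVpoly u) v.
  rewrite /annihilates -[u]trmxK -krylov_mxM -[krylov_mx v]trmxK -trmx_mul.
  by rewrite uK trmx0.
have u0 : rVpoly u = 0.
  apply: contraTeq (p_min _ uv) => u_neq0.
  by rewrite gtNdvdp // size_p ltnS size_poly.
by rewrite -[u]rVpolyK u0 linear0.
Qed.

Lemma krylov_cyclic_vector v p : local_minpoly A v p -> size p = n.+2 ->
  cyclic_vector v.
Proof.
move=> vp size_p w; exists (rVpoly (invmx (krylov_mx v) *m w)^T).
by rewrite -krylov_mxM mulKVmx // (krylov_mx_unit vp size_p).
Qed.

Lemma separable_char_poly_cyclic :
  separable_poly (char_poly A) -> exists v, cyclic_vector v.
Proof.
move=> sepA; have [p0 p0_min] := local_minpoly_exists A 0.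
have [k [v [p [vp size_pk]]] k_min] := ex_least_nat
  (ex_intro (fun k => exists v p, local_minpoly A v p /\ (n.+2 <= size p + k)%N) _
    (ex_intro _ 0 (ex_intro _ p0 (conj p0_min (leq_addl _ _))))).
exists v; apply: (krylov_cyclic_vector vp).
apply: separable_max_local_minpoly_size sepA vp _.
move=> w q wq; have size_q : (size q <= n.+2)%N.
  rewrite -(size_char_poly A) dvdp_leq ?(local_minpoly_dvd_char wq) //.
  exact/monic_neq0/char_poly_monic.
have k_le : (k <= n.+2 - size q)%N by apply: k_min; exists w, q; rewrite subnKC.
by move: size_pk; lia.
Qed.

Lemma cyclic_vector_horner_mx_eq0 v p :
  cyclic_vector v -> horner_mx A p *m v = 0 -> horner_mx A p = 0.
Proof.
move=> Av pv; apply: mx_eq0_cols => w; have [q ->] := Av w.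
by rewrite mulmxA mulmxE comm_horner_mx2 -mulmxE -mulmxA pv mulmx0.
Qed.

End CyclicVector.

Lemma horner_mx_intertwine (R : comNzRingType) n (A B X : 'M[R]_n.+1) p :
  X *m B = A *m X -> X *m horner_mx B p = horner_mx A p *m X.
Proof.
move=> XBA; elim/poly_ind: p => [|p c IHp].
  by rewrite !rmorph0 mulmx0 mul0mx.
rewrite !rmorphD !rmorphM /= !horner_mx_X !horner_mx_C mulmxDr mulmxDl.
by rewrite -!mulmxE mulmxA IHp -!mulmxA XBA !scalar_mxC.
Qed.

Lemma trmx_horner_mx (R : comNzRingType) n (A : 'M[R]_n.+1) p :
  (horner_mx A p)^T = horner_mx A^T p.
Proof.
elim/poly_ind: p => [|p c IHp]; first by rewrite !rmorph0 trmx0.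
rewrite !rmorphD !rmorphM /= !horner_mx_X !horner_mx_C.
rewrite linearD /= tr_scalar_mx -mulmxE trmx_mul IHp mulmxE.
by rewrite -{1}(horner_mx_X A^T) -rmorphM mulrC rmorphM /= horner_mx_X.
Qed.

Lemma mxstar_horner_mx (F : fieldType) (sigma : {rmorphism F -> F}) n
    (A : 'M[F]_n.+1) p :
  mxstar sigma (horner_mx A p) = horner_mx (mxstar sigma A) (map_poly sigma p).
Proof. by rewrite /mxstar map_horner_mx trmx_horner_mx. Qed.

Section ConjugateNorm.

Variables (F : fieldType) (sigma : {rmorphism F -> F}).
Hypothesis sigmaK : involutive sigma.
Variables (n : nat) (A b : 'M[F]_n.+1).
Hypothesis Db : b *m map_mx sigma b = A.

Local Notation "M ^s" := (map_mx sigma M) (at level 2, format "M ^s").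

Lemma map_mxK m p (M : 'M[F]_(m, p)) : (M^s)^s = M.
Proof. by rewrite -map_mx_comp map_mx_id. Qed.

Lemma conj_norm_intertwine : b *m A^s = A *m b.
Proof. by rewrite -Db map_mxM map_mxK !mulmxA. Qed.

Lemma cyclic_conj_norm_poly v : cyclic_vector A v ->
  exists q, A = horner_mx A (map_poly sigma q) *m horner_mx A q.
Proof.
move=> Av; have [q Dbv] := Av (b *m v^s); exists q.
set c := horner_mx A q; set cs := horner_mx A (map_poly sigma q).
have Dbcv : b *m (c *m v)^s = cs *m (c *m v).
  rewrite map_mxM map_horner_mx mulmxA.
  rewrite (horner_mx_intertwine _ conj_norm_intertwine).
  by rewrite -mulmxA Dbv.
have DAv : A *m v = cs *m c *m v.
  by rewrite -mulmxA -Dbcv -Dbv map_mxM map_mxK mulmxA Db.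
apply/eqP; rewrite -subr_eq0; apply/eqP.
have -> : A - cs *m c = horner_mx A ('X - map_poly sigma q * q).
  by rewrite rmorphB rmorphM /= horner_mx_X mulmxE.
apply: cyclic_vector_horner_mx_eq0 Av _.
by rewrite rmorphB rmorphM /= horner_mx_X mulmxBl -mulmxE DAv subrr.
Qed.

End ConjugateNorm.

Theorem mainTheorem12 (E : fieldType) (sigma : {rmorphism E -> E})
  (n : nat) (beta A' a : 'M[E]_n) :
  is_nontrivial_involution sigma ->
  [pchar E] =i pred0 ->
  beta \in unitmx ->
  mxstar sigma beta = - beta ->
  in_h sigma beta A' ->
  regular_semisimple A' ->
  a \in unitmx ->
  A' = mxconj sigma a *m a ->
  exists2 zeta : 'M[E]_n, zeta \in unitmx &
    A' = invmx beta *m mxstar sigma zeta *m beta *m zeta.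
Proof.
case: n beta A' a => [|n] beta A' a [sigmaK _] _ beta_unit _ A'_h A'_rs a_unit DA'.
  by exists 1%:M; [exact: unitmx1 | apply/matrixP => [[]]].
have [v A'v] : exists v, cyclic_vector A' v.
  by apply: separable_char_poly_cyclic; rewrite unlock.
have [q DA] : exists q, A' = horner_mx A' (map_poly sigma q) *m horner_mx A' q.
  apply: (cyclic_conj_norm_poly (b := mxconj sigma a) sigmaK _ A'v).
  by rewrite /mxconj map_mxK // -DA'.
exists (horner_mx A' q).
  have : A' \in unitmx by rewrite DA' unitmx_mul map_unitmx a_unit.
  by rewrite {1}DA unitmx_mul => /andP[].
rewrite mxstar_horner_mx A'_h horner_mx_uconj //.
by rewrite !mulmxA mulVmx // mul1mx mulmxKV.
Qed.
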